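(* Let $p>1$, $N\ge m$, and let $S$ be the set of pairs $(A,y)\in\mathbb R^{m\times N}\times\mathbb R^m$ such that every $m\times m$ submatrix of $A$ is invertible and $y\neq0$. For every $(A,y)\in S$: (i) the unique optimal solution $x^*$ of $\min\|x\|_p$ s.t. $Ax=y$ satisfies $|\mathrm{supp}(x^* )|\ge N-m+1$; (ii) if $0<\varepsilon<\|y\|_2$, the unique optimal solution $x^*$ of $\min\|x\|_p$ s.t. $\|Ax-y\|_2\le\varepsilon$ satisfies $|\mathrm{supp}(x^* )|\ge N-m+1$; (iii) for any $\lambda>0$, the unique optimal solution $x^*$ of $\min_x \frac12\|Ax-y\|_2^2+\lambda\|x\|_p^p$ satisfies $|\mathrm{supp}(x^* )|\ge N-m+1$; (iv) for any $r>0$, $\lambda_1>0$, $\lambda_2\ge0$, every nonzero optimal solution $x^*$ of $\min_x \frac12\|Ax-y\|_2^2+\lambda_1\|x\|_p^r+\lambda_2\|x\|_2^2$ satisfies $|\mathrm{supp}(x^* )|\ge N-m+1$.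
   Context: $\|x\|_p:=(\sum_i|x_i|^p)^{1/p}$; $\mathrm{supp}(x)=\{i: x_i\neq0\}$ and $|\cdot|$ denotes cardinality. *)

From Stdlib Require Import Reals Lra Lia List.
Import ListNotations.
Open Scope R_scope.

(* Vectors in R^n are functions nat -> R; only indices < n are meaningful.
   Matrices in R^{m x n} are functions nat -> nat -> R (row, column). *)

Fixpoint rsum (n : nat) (f : nat -> R) : R :=
  match n with
  | O => 0
  | S k => rsum k f + f k
  end.

Definition isvec (n : nat) (x : nat -> R) : Prop :=
  forall i, (n <= i)%nat -> x i = 0.

(* a^q for a >= 0 and q > 0, with the convention 0^q = 0
   (Stdlib's Rpower 0 q = 1, which is not the intended value). *)
Definition powR (a q : R) : R :=
  match Rle_dec a 0 with
  | left _ => 0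
  | right _ => Rpower a q
  end.

Definition pnorm (p : R) (n : nat) (x : nat -> R) : R :=
  powR (rsum n (fun i => powR (Rabs (x i)) p)) (/ p).

Definition norm2 (n : nat) (x : nat -> R) : R :=
  sqrt (rsum n (fun i => x i * x i)).

Definition matvec (n : nat) (A : nat -> nat -> R) (x : nat -> R) : nat -> R :=
  fun i => rsum n (fun j => A i j * x j).

Definition resid (n : nat) (A : nat -> nat -> R) (x y : nat -> R) : nat -> R :=
  fun i => matvec n A x i - y i.

Definition supp_card (n : nat) (x : nat -> R) : nat :=
  length (filter (fun i => if Req_EM_T (x i) 0 then false else true) (seq 0 n)).

Definition invertible (m : nat) (M : nat -> nat -> R) : Prop :=
  exists B : nat -> nat -> R,
    forall i k, (i < m)%nat -> (k < m)%nat ->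
      rsum m (fun j => M i j * B j k) = (if Nat.eq_dec i k then 1 else 0) /\
      rsum m (fun j => B i j * M j k) = (if Nat.eq_dec i k then 1 else 0).

Definition all_square_submatrices_invertible (m N : nat) (A : nat -> nat -> R) : Prop :=
  forall c : nat -> nat,
    (forall j k, (j < k)%nat -> (k < m)%nat -> (c j < c k)%nat) ->
    (forall j, (j < m)%nat -> (c j < N)%nat) ->
    invertible m (fun i j => A i (c j)).

Definition nonzero_vec (m : nat) (y : nat -> R) : Prop :=
  exists i, (i < m)%nat /\ y i <> 0.

Definition is_optimal (n : nat) (feas : (nat -> R) -> Prop) (f : (nat -> R) -> R)
  (x : nat -> R) : Prop :=
  isvec n x /\ feas x /\
  forall z, isvec n z -> feas z -> f x <= f z.

(* If an optimal x had at most N - m nonzero entries, it would vanish on some m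
   coordinates, whose columns in A form an invertible matrix.  So for any j with
   x_j <> 0 there is a direction d with A d = 0, d_j = - x_j, and d supported on j and
   those m zero coordinates.  Along x + t d the value A x is unchanged, while
   sum_i |x_i|^p drops by at least t |x_j|^p and grows by at most t^p sum_i |d_i|^p,
   a net decrease for small t since p > 1; the squared 2-norm drops too, because
   <x, d> = - x_j^2.  Hence every objective strictly decreases, contradicting
   optimality.  The zero vector is infeasible in (i) and (ii), and in (iii) it is
   beaten by t u with A u = y: the residual term then drops by about t ||y||^2 at
   a cost of order t^p. *)

From Stdlib Require Import Reals Lra Lia List.
Open Scope R_scope.

Lemma rsum_ext n f g : (forall i, (i < n)%nat -> f i = g i) -> rsum n f = rsum n g.
Proof.
  induction n as [|n IH]; intros H; simpl; [reflexivity|].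
  rewrite IH, H; [reflexivity|lia|intros; apply H; lia].
Qed.

Lemma rsum_le n f g : (forall i, (i < n)%nat -> f i <= g i) -> rsum n f <= rsum n g.
Proof.
  induction n as [|n IH]; intros H; simpl; [lra|].
  apply Rplus_le_compat; [apply IH; intros; apply H|apply H]; lia.
Qed.

Lemma rsum_plus n f g : rsum n (fun i => f i + g i) = rsum n f + rsum n g.
Proof. induction n as [|n IH]; simpl; [|rewrite IH]; lra. Qed.

Lemma rsum_minus n f g : rsum n (fun i => f i - g i) = rsum n f - rsum n g.
Proof. induction n as [|n IH]; simpl; [|rewrite IH]; lra. Qed.

Lemma rsum_scal n c f : rsum n (fun i => c * f i) = c * rsum n f.
Proof. induction n as [|n IH]; simpl; [|rewrite IH]; lra. Qed.

Lemma rsum_0 n : rsum n (fun _ => 0) = 0.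
Proof. induction n as [|n IH]; simpl; [|rewrite IH]; lra. Qed.

Lemma rsum_nonneg n f : (forall i, (i < n)%nat -> 0 <= f i) -> 0 <= rsum n f.
Proof. intros H. rewrite <- (rsum_0 n). apply rsum_le; assumption. Qed.

Lemma rsum_ge_term n f i :
  (forall k, (k < n)%nat -> 0 <= f k) -> (i < n)%nat -> f i <= rsum n f.
Proof.
  induction n as [|n IH]; intros H Hi; simpl; [lia|].
  assert (0 <= rsum n f) by (apply rsum_nonneg; intros; apply H; lia).
  assert (0 <= f n) by (apply H; lia).
  destruct (Nat.eq_dec i n) as [->|Hin]; [lra|].
  assert (f i <= rsum n f) by (apply IH; [intros; apply H|]; lia).
  lra.
Qed.

Lemma rsum_delta n j g :
  (j < n)%nat -> rsum n (fun i => if Nat.eq_dec i j then g i else 0) = g j.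
Proof.
  induction n as [|n IH]; intros Hj; simpl; [lia|].
  destruct (Nat.eq_dec n j) as [->|Hnj].
  - rewrite (rsum_ext _ _ (fun _ => 0)), rsum_0; [lra|].
    intros i Hi. destruct (Nat.eq_dec i j); [lia|reflexivity].
  - rewrite IH by lia. lra.
Qed.

Lemma rsum_swap n m f :
  rsum n (fun i => rsum m (fun k => f i k)) = rsum m (fun k => rsum n (fun i => f i k)).
Proof.
  induction n as [|n IH]; simpl; [symmetry; apply rsum_0|].
  rewrite IH, <- rsum_plus. reflexivity.
Qed.

Lemma powR_nonneg a q : 0 <= powR a q.
Proof. unfold powR. destruct (Rle_dec a 0); [lra|]. left; apply exp_pos. Qed.

Lemma powR_Rpower a q : 0 < a -> powR a q = Rpower a q.
Proof. intros Ha. unfold powR. destruct (Rle_dec a 0); [lra|reflexivity]. Qed.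

Lemma powR_0 q : powR 0 q = 0.
Proof. unfold powR. destruct (Rle_dec 0 0); [reflexivity|lra]. Qed.

Lemma powR_mult u v q : 0 <= u -> 0 <= v -> powR (u * v) q = powR u q * powR v q.
Proof.
  intros [Hu|<-] [Hv|<-]; rewrite ?Rmult_0_l, ?Rmult_0_r, ?powR_0; try ring.
  rewrite !powR_Rpower by (try apply Rmult_lt_0_compat; assumption).
  symmetry; apply Rpower_mult_distr; assumption.
Qed.

Lemma powR_lt u v q : 0 < q -> 0 <= u < v -> powR u q < powR v q.
Proof.
  intros Hq [[Hu|<-] Huv]; rewrite (powR_Rpower v) by lra.
  - rewrite powR_Rpower by lra. apply Rlt_Rpower_l; lra.
  - rewrite powR_0. apply exp_pos.
Qed.

Lemma powR_le_self x p : 1 <= p -> 0 <= x <= 1 -> powR x p <= x.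
Proof.
  intros Hp [[Hx0|<-] Hx1]; [|rewrite powR_0; lra].
  rewrite powR_Rpower by lra.
  destruct Hx1 as [Hx1| ->]; unfold Rpower; [|rewrite ln_1, Rmult_0_r, exp_0; lra].
  assert (Hln : ln x < 0) by (rewrite <- ln_1; apply ln_increasing; lra).
  rewrite <- (exp_ln x) at 2 by lra.
  destruct (Rle_lt_or_eq_dec (p * ln x) (ln x)) as [Hlt| ->]; [nra| |lra].
  left; apply exp_increasing; exact Hlt.
Qed.

Lemma powR_abs_scal p t a : 0 < t -> powR (Rabs (t * a)) p = Rpower t p * powR (Rabs a) p.
Proof.
  intros Ht. rewrite Rabs_mult, (Rabs_pos_eq t), powR_mult, powR_Rpower by (lra || apply Rabs_pos).
  reflexivity.
Qed.

Lemma exists_small_Rpower_lt_linear p C D b :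
  1 < p -> 0 <= C -> 0 < D -> 0 < b ->
  exists t, 0 < t <= b /\ C * Rpower t p < t * D.
Proof.
  intros Hp HC HD Hb.
  set (s := Rmin (Rpower b (p - 1)) (D / (C + 1))).
  assert (Hs : 0 < s) by (apply Rmin_glb_lt; [apply exp_pos|apply Rdiv_lt_0_compat; lra]).
  (* t^(p-1) = s, so that t^p = t s and C s < D. *)
  set (t := Rpower s (/ (p - 1))).
  assert (Ht : 0 < t) by apply exp_pos.
  assert (Hts : Rpower t (p - 1) = s)
    by (unfold t; rewrite Rpower_mult, Rinv_l, Rpower_1 by lra; reflexivity).
  exists t. split; [split; [exact Ht|]|].
  - assert (Hbb : Rpower (Rpower b (p - 1)) (/ (p - 1)) = b)
      by (rewrite Rpower_mult, Rinv_r, Rpower_1 by lra; reflexivity).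
    rewrite <- Hbb. apply Rle_Rpower_l; [left; apply Rinv_0_lt_compat; lra|].
    split; [exact Hs|apply Rmin_l].
  - assert (Hsplit : Rpower t p = t * s).
    { rewrite <- Hts. rewrite <- (Rpower_1 t Ht) at 2. rewrite <- Rpower_plus. f_equal; ring. }
    assert (Hq : D / (C + 1) * (C + 1) = D) by (field; lra).
    assert (Hsq : s <= D / (C + 1)) by apply Rmin_r.
    assert (HCs : C * s < D) by nra.
    rewrite Hsplit. nra.
Qed.

Definition psum (p : R) (n : nat) (x : nat -> R) : R := rsum n (fun i => powR (Rabs (x i)) p).

Definition sqsum (n : nat) (x : nat -> R) : R := rsum n (fun i => x i * x i).

Lemma psum_nonneg p n x : 0 <= psum p n x.
Proof. apply rsum_nonneg; intros; apply powR_nonneg. Qed.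

Lemma sqsum_nonneg n x : 0 <= sqsum n x.
Proof. apply rsum_nonneg; intros; nra. Qed.

Lemma sqsum_pos n x : nonzero_vec n x -> 0 < sqsum n x.
Proof.
  intros [i [Hi Hxi]].
  apply Rlt_le_trans with (x i * x i); [nra|].
  apply (rsum_ge_term n (fun k => x k * x k)); [intros; nra|exact Hi].
Qed.

Lemma powR_pnorm p n x : 0 < p -> powR (pnorm p n x) p = psum p n x.
Proof.
  intros Hp. unfold pnorm. fold (psum p n x).
  destruct (psum_nonneg p n x) as [Hpos|<-]; [|rewrite !powR_0; reflexivity].
  rewrite (powR_Rpower (psum p n x)), powR_Rpower by (exact Hpos || apply exp_pos).
  rewrite Rpower_mult, Rinv_l, Rpower_1 by lra. reflexivity.
Qed.

Lemma pnorm_lt p n x z : 0 < p -> psum p n z < psum p n x -> pnorm p n z < pnorm p n x.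
Proof.
  intros Hp H. apply powR_lt; [apply Rinv_0_lt_compat; exact Hp|].
  split; [apply psum_nonneg|exact H].
Qed.

Lemma norm2_sq n x : norm2 n x ^ 2 = sqsum n x.
Proof. apply pow2_sqrt, sqsum_nonneg. Qed.

Fixpoint zero_card (n : nat) (x : nat -> R) : nat :=
  match n with
  | O => O
  | S k => (zero_card k x + if Req_EM_T (x k) 0 then 1 else 0)%nat
  end.

Lemma supp_card_add_zero_card n x : (supp_card n x + zero_card n x)%nat = n.
Proof.
  induction n as [|n IH]; [reflexivity|].
  unfold supp_card in *. simpl zero_card.
  rewrite seq_S, filter_app, length_app. simpl.
  destruct (Req_EM_T (x n) 0); simpl; lia.
Qed.

Lemma zero_indices n x m : (m <= zero_card n x)%nat ->
  exists c : nat -> nat,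
    (forall j k, (j < k)%nat -> (k < m)%nat -> (c j < c k)%nat) /\
    (forall k, (k < m)%nat -> (c k < n)%nat /\ x (c k) = 0).
Proof.
  revert m. induction n as [|n IH]; intros m Hm; simpl in Hm.
  - exists (fun k => k). split; intros; lia.
  - destruct (Req_EM_T (x n) 0) as [Hxn|Hxn].
    + destruct m as [|m]; [exists (fun k => k); split; intros; lia|].
      destruct (IH m ltac:(lia)) as [c [Hinc Hzero]].
      exists (fun k => if Nat.ltb k m then c k else n). split.
      * intros j k Hjk Hk.
        destruct (Nat.ltb_spec j m), (Nat.ltb_spec k m); try lia.
        -- apply Hinc; lia.
        -- apply Hzero; lia.
      * intros k Hk. destruct (Nat.ltb_spec k m) as [Hkm|Hkm].
        -- destruct (Hzero k Hkm); split; [lia|assumption].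
        -- split; [lia|exact Hxn].
    + destruct (IH m ltac:(lia)) as [c [Hinc Hzero]].
      exists c. split; [exact Hinc|].
      intros k Hk. destruct (Hzero k Hk); split; [lia|assumption].
Qed.

Lemma vec_nonzero_or_zero n x : nonzero_vec n x \/ forall i, (i < n)%nat -> x i = 0.
Proof.
  induction n as [|n [[j [Hj Hxj]]|IH]].
  - right; intros; lia.
  - left; exists j; split; [lia|exact Hxj].
  - destruct (Req_EM_T (x n) 0) as [Hxn|Hxn].
    + right; intros i Hi. destruct (Nat.eq_dec i n) as [->|]; [exact Hxn|apply IH; lia].
    + left; exists n; split; [lia|exact Hxn].
Qed.

Lemma matvec_axpy n A x d t l :
  matvec n A (fun i => x i + t * d i) l = matvec n A x l + t * matvec n A d l.
Proof. unfold matvec. rewrite <- rsum_scal, <- rsum_plus. apply rsum_ext; intros; ring. Qed.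

Lemma matvec_scal n A x t l : matvec n A (fun i => t * x i) l = t * matvec n A x l.
Proof. unfold matvec. rewrite <- rsum_scal. apply rsum_ext; intros; ring. Qed.

Lemma matvec_vanishing n A x l : (forall i, (i < n)%nat -> x i = 0) -> matvec n A x l = 0.
Proof.
  intros H. unfold matvec. rewrite <- (rsum_0 n).
  apply rsum_ext; intros i Hi. rewrite H by exact Hi. ring.
Qed.

Lemma norm2_resid_ext m n A x z y :
  (forall l, (l < m)%nat -> matvec n A z l = matvec n A x l) ->
  norm2 m (resid n A z y) = norm2 m (resid n A x y).
Proof.
  intros H. unfold norm2, resid. f_equal.
  apply rsum_ext; intros l Hl. rewrite H by exact Hl. reflexivity.
Qed.

Lemma norm2_resid_vanishing m n A x y :
  (forall i, (i < n)%nat -> x i = 0) -> norm2 m (resid n A x y) = norm2 m y.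
Proof.
  intros Hx. unfold norm2, resid. f_equal.
  apply rsum_ext; intros l _. rewrite matvec_vanishing by exact Hx. ring.
Qed.

Lemma matvec_on_columns m n A c e l :
  (forall k, (k < m)%nat -> (c k < n)%nat) ->
  matvec n A (fun i => rsum m (fun k => if Nat.eq_dec i (c k) then e k else 0)) l =
  rsum m (fun k => A l (c k) * e k).
Proof.
  intros Hc. unfold matvec.
  transitivity
    (rsum n (fun i => rsum m (fun k => if Nat.eq_dec i (c k) then A l (c k) * e k else 0))).
  { apply rsum_ext; intros i _. rewrite <- rsum_scal. apply rsum_ext; intros k _.
    destruct (Nat.eq_dec i (c k)) as [->|]; ring. }
  rewrite rsum_swap. apply rsum_ext; intros k Hk. apply rsum_delta, Hc, Hk.
Qed.

Lemma solve_on_columns m n A c w :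
  (forall k, (k < m)%nat -> (c k < n)%nat) -> invertible m (fun i k => A i (c k)) ->
  exists u, isvec n u /\ (forall l, (l < m)%nat -> matvec n A u l = w l) /\
    (forall i, (forall k, (k < m)%nat -> c k <> i) -> u i = 0).
Proof.
  intros Hc [B HB].
  set (e := fun k => rsum m (fun l => B k l * w l)).
  set (u := fun i => rsum m (fun k => if Nat.eq_dec i (c k) then e k else 0)).
  assert (Hu0 : forall i, (forall k, (k < m)%nat -> c k <> i) -> u i = 0).
  { intros i Hi. unfold u. transitivity (rsum m (fun _ => 0)); [|apply rsum_0].
    apply rsum_ext; intros k Hk.
    destruct (Nat.eq_dec i (c k)); [exfalso; apply (Hi k Hk); auto|reflexivity]. }
  exists u. split; [|split; [|exact Hu0]].
  - intros i Hi. apply Hu0. intros k Hk E. specialize (Hc k Hk). lia.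
  - intros l Hl. unfold u. rewrite matvec_on_columns by exact Hc. unfold e.
    transitivity (rsum m (fun k => rsum m (fun l' => A l (c k) * B k l' * w l'))).
    { apply rsum_ext; intros k _. rewrite <- rsum_scal. apply rsum_ext; intros; ring. }
    rewrite rsum_swap, (rsum_ext m _ (fun l' => if Nat.eq_dec l' l then w l' else 0)).
    + apply rsum_delta, Hl.
    + intros l' Hl'.
      rewrite (rsum_ext m _ (fun k => w l' * (A l (c k) * B k l'))) by (intros; ring).
      rewrite rsum_scal. destruct (HB l l' Hl Hl') as [-> _].
      destruct (Nat.eq_dec l l'), (Nat.eq_dec l' l); subst; try lia; ring.
Qed.

Lemma kernel_direction_through_zeros m n A x j :
  all_square_submatrices_invertible m n A -> isvec n x -> (j < n)%nat -> x j <> 0 ->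
  (m <= zero_card n x)%nat ->
  exists d, isvec n d /\ (forall l, (l < m)%nat -> matvec n A d l = 0) /\
    d j = - x j /\ (forall i, i <> j -> x i = 0 \/ d i = 0).
Proof.
  intros HA Hx Hj Hxj Hzeros.
  destruct (zero_indices n x m Hzeros) as [c [Hinc Hc]].
  (* A u = x_j A e_j with u supported where x vanishes, so d = u - x_j e_j is in ker A. *)
  destruct (solve_on_columns m n A c (fun l => A l j * x j)) as [u [Hu [HAu Hu0]]].
  { intros k Hk. apply Hc, Hk. }
  { apply HA; [exact Hinc|intros k Hk; apply Hc, Hk]. }
  assert (Hu_supp : forall i, x i <> 0 -> u i = 0).
  { intros i Hxi. apply Hu0. intros k Hk <-. apply Hxi, Hc, Hk. }
  exists (fun i => u i - if Nat.eq_dec i j then x j else 0).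
  split; [|split; [|split]].
  - intros i Hi. rewrite Hu by exact Hi. destruct (Nat.eq_dec i j); [lia|ring].
  - intros l Hl. unfold matvec.
    rewrite (rsum_ext n _ (fun i => A l i * u i - if Nat.eq_dec i j then A l i * x j else 0))
      by (intros i _; destruct (Nat.eq_dec i j); ring).
    rewrite rsum_minus, rsum_delta by exact Hj. fold (matvec n A u l).
    rewrite HAu by exact Hl. ring.
  - rewrite Hu_supp by exact Hxj. destruct (Nat.eq_dec j j); [ring|lia].
  - intros i Hij. destruct (Req_EM_T (x i) 0) as [Hxi|Hxi]; [left; exact Hxi|right].
    rewrite Hu_supp by exact Hxi. destruct (Nat.eq_dec i j); [lia|ring].
Qed.

Section Descent.

Variables (n j : nat) (x d : nat -> R).
Hypotheses (Hj : (j < n)%nat) (Hdj : d j = - x j)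
  (Hdisj : forall i, i <> j -> x i = 0 \/ d i = 0).

Lemma psum_along_direction p t : 1 <= p -> 0 < t <= 1 ->
  psum p n (fun i => x i + t * d i)
    <= psum p n x + Rpower t p * psum p n d - t * powR (Rabs (x j)) p.
Proof.
  intros Hp Ht.
  assert (Hpt : forall i, powR (Rabs (x i + t * d i)) p
    <= powR (Rabs (x i)) p + Rpower t p * powR (Rabs (d i)) p
       - if Nat.eq_dec i j then t * powR (Rabs (x j)) p else 0).
  { intros i. assert (0 <= Rpower t p * powR (Rabs (d i)) p)
      by (apply Rmult_le_pos; [left; apply exp_pos|apply powR_nonneg]).
    destruct (Nat.eq_dec i j) as [->|Hij].
    - rewrite Hdj in *. replace (x j + t * - x j) with ((1 - t) * x j) by ring.
      rewrite Rabs_mult, (Rabs_pos_eq (1 - t)), powR_mult by (lra || apply Rabs_pos).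
      assert (powR (1 - t) p <= 1 - t) by (apply powR_le_self; lra).
      assert (0 <= powR (Rabs (x j)) p) by apply powR_nonneg.
      nra.
    - destruct (Hdisj i Hij) as [-> | ->].
      + rewrite Rplus_0_l, powR_abs_scal, Rabs_R0, powR_0 by lra. lra.
      + rewrite Rmult_0_r, Rplus_0_r, Rabs_R0, powR_0. lra. }
  unfold psum. eapply Rle_trans; [apply rsum_le; intros i _; apply Hpt|].
  rewrite rsum_minus, rsum_plus, rsum_scal, (rsum_delta n j (fun _ => _)) by exact Hj.
  lra.
Qed.

Lemma sqsum_along_direction t :
  sqsum n (fun i => x i + t * d i) = sqsum n x + t * t * sqsum n d - 2 * t * (x j * x j).
Proof.
  unfold sqsum.
  rewrite <- rsum_scal, <- rsum_plus.
  rewrite <- (rsum_delta n j (fun _ => 2 * t * (x j * x j))) by exact Hj.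
  rewrite <- rsum_minus. apply rsum_ext; intros i _.
  destruct (Nat.eq_dec i j) as [->|Hij]; [rewrite Hdj; ring|].
  destruct (Hdisj i Hij) as [-> | ->]; ring.
Qed.

Lemma descent_along_direction p : 1 < p -> x j <> 0 ->
  exists t, psum p n (fun i => x i + t * d i) < psum p n x /\
            sqsum n (fun i => x i + t * d i) <= sqsum n x.
Proof.
  intros Hp Hxj.
  assert (HD : 0 < powR (Rabs (x j)) p)
    by (rewrite powR_Rpower by (apply Rabs_pos_lt, Hxj); apply exp_pos).
  assert (Hxj2 : 0 < x j * x j) by nra.
  pose proof (sqsum_nonneg n d) as HK2.
  (* The second bound makes t^2 |d|^2 <= 2 t x_j^2, the first-order gain in sqsum. *)
  set (b := Rmin 1 (2 * (x j * x j) / (sqsum n d + 1))).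
  assert (Hb : 0 < b) by (apply Rmin_glb_lt; [lra|apply Rdiv_lt_0_compat; lra]).
  destruct (exists_small_Rpower_lt_linear p (psum p n d) (powR (Rabs (x j)) p) b Hp
              (psum_nonneg p n d) HD Hb) as [t [[Ht0 Htb] Hsmall]].
  assert (Ht1 : t <= 1) by (apply (Rle_trans _ b); [exact Htb|apply Rmin_l]).
  assert (HtK2 : t * (sqsum n d + 1) <= 2 * (x j * x j)).
  { assert (Htq : t <= 2 * (x j * x j) / (sqsum n d + 1))
      by (apply (Rle_trans _ b); [exact Htb|apply Rmin_r]).
    apply Rmult_le_compat_r with (r := sqsum n d + 1) in Htq; [|lra].
    replace (2 * (x j * x j) / (sqsum n d + 1) * (sqsum n d + 1)) with (2 * (x j * x j))
      in Htq by (field; lra).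
    exact Htq. }
  exists t. split.
  - pose proof (psum_along_direction p t ltac:(lra) ltac:(lra)). lra.
  - rewrite sqsum_along_direction. nra.
Qed.

End Descent.

Lemma sparse_descent p m n A x :
  1 < p -> (m <= n)%nat -> all_square_submatrices_invertible m n A ->
  isvec n x -> nonzero_vec n x -> (supp_card n x < n - m + 1)%nat ->
  exists z, isvec n z /\ (forall l, (l < m)%nat -> matvec n A z l = matvec n A x l) /\
    psum p n z < psum p n x /\ sqsum n z <= sqsum n x.
Proof.
  intros Hp HmN HA Hx [j [Hj Hxj]] Hsupp.
  assert (Hzeros : (m <= zero_card n x)%nat) by (pose proof (supp_card_add_zero_card n x); lia).
  destruct (kernel_direction_through_zeros m n A x j HA Hx Hj Hxj Hzeros)
    as [d [Hd [HAd [Hdj Hdisj]]]].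
  destruct (descent_along_direction n j x d Hj Hdj Hdisj p Hp Hxj) as [t [Hpsum Hsqsum]].
  exists (fun i => x i + t * d i). split; [|split; [|split]]; try assumption.
  - intros i Hi. rewrite Hx, Hd by exact Hi. ring.
  - intros l Hl. rewrite matvec_axpy, HAd by exact Hl. ring.
Qed.

Lemma penalized_objective_below_zero p m n A y lam x :
  1 < p -> (m <= n)%nat -> all_square_submatrices_invertible m n A -> nonzero_vec m y ->
  0 < lam -> (forall i, (i < n)%nat -> x i = 0) ->
  exists z, isvec n z /\
    / 2 * norm2 m (resid n A z y) ^ 2 + lam * powR (pnorm p n z) p
    < / 2 * norm2 m (resid n A x y) ^ 2 + lam * powR (pnorm p n x) p.
Proof.
  intros Hp HmN HA Hy Hlam Hx.
  destruct (solve_on_columns m n A (fun k => k) y) as [u [Hu [HAu _]]].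
  { intros k Hk. lia. }
  { apply HA; intros; lia. }
  pose proof (sqsum_pos m y Hy) as HY.
  destruct (exists_small_Rpower_lt_linear p (lam * psum p n u) (sqsum m y / 2) 1 Hp)
    as [t [[Ht0 Ht1] Hsmall]]; [apply Rmult_le_pos; [lra|apply psum_nonneg]|lra|lra|].
  exists (fun i => t * u i). split; [intros i Hi; rewrite Hu by exact Hi; ring|].
  rewrite (norm2_resid_vanishing m n A x y Hx), !powR_pnorm, !norm2_sq by lra.
  assert (Hres : sqsum m (resid n A (fun i => t * u i) y) = (1 - t) * (1 - t) * sqsum m y).
  { unfold sqsum, resid. rewrite <- rsum_scal. apply rsum_ext; intros l Hl.
    rewrite matvec_scal, HAu by exact Hl. ring. }
  assert (Hpsum0 : psum p n x = 0).
  { unfold psum. rewrite <- (rsum_0 n). apply rsum_ext; intros i Hi.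
    rewrite Hx, Rabs_R0, powR_0 by exact Hi. reflexivity. }
  assert (Hpsum : psum p n (fun i => t * u i) = Rpower t p * psum p n u).
  { unfold psum. rewrite <- rsum_scal. apply rsum_ext; intros i _. apply powR_abs_scal, Ht0. }
  rewrite Hres, Hpsum0, Hpsum.
  assert (t * t * sqsum m y <= t * sqsum m y) by (apply Rmult_le_compat_r; nra).
  nra.
Qed.

Section SupportBounds.

Variables (p : R) (m N : nat) (A : nat -> nat -> R) (y : nat -> R).
Hypotheses (Hp : 1 < p) (HmN : (m <= N)%nat)
  (HA : all_square_submatrices_invertible m N A) (Hy : nonzero_vec m y).

Lemma basis_pursuit_support xs :
  is_optimal N (fun x => forall i, (i < m)%nat -> matvec N A x i = y i)
    (fun x => pnorm p N x) xs ->
  (N - m + 1 <= supp_card N xs)%nat.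
Proof.
  intros [Hxs [Hfeas Hopt]].
  destruct (Nat.le_gt_cases (N - m + 1) (supp_card N xs)) as [Hs|Hs]; [exact Hs|exfalso].
  destruct (vec_nonzero_or_zero N xs) as [Hnz|Hzero].
  - destruct (sparse_descent p m N A xs Hp HmN HA Hxs Hnz Hs) as [z [Hz [HAz [Hpz _]]]].
    apply (Rlt_not_le _ _ (pnorm_lt p N xs z ltac:(lra) Hpz)), Hopt; [exact Hz|].
    intros i Hi. rewrite HAz by exact Hi. apply Hfeas, Hi.
  - destruct Hy as [i [Hi Hyi]]. apply Hyi.
    rewrite <- (Hfeas i Hi). apply matvec_vanishing, Hzero.
Qed.

Lemma denoising_support eps :
  0 < eps -> eps < norm2 m y ->
  forall xs, is_optimal N (fun x => norm2 m (resid N A x y) <= eps)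
    (fun x => pnorm p N x) xs ->
  (N - m + 1 <= supp_card N xs)%nat.
Proof.
  intros Heps Hepsy xs [Hxs [Hfeas Hopt]].
  destruct (Nat.le_gt_cases (N - m + 1) (supp_card N xs)) as [Hs|Hs]; [exact Hs|exfalso].
  destruct (vec_nonzero_or_zero N xs) as [Hnz|Hzero].
  - destruct (sparse_descent p m N A xs Hp HmN HA Hxs Hnz Hs) as [z [Hz [HAz [Hpz _]]]].
    apply (Rlt_not_le _ _ (pnorm_lt p N xs z ltac:(lra) Hpz)), Hopt; [exact Hz|].
    rewrite (norm2_resid_ext m N A xs z y HAz). exact Hfeas.
  - rewrite norm2_resid_vanishing in Hfeas by exact Hzero. lra.
Qed.

Lemma lp_penalized_support lam :
  0 < lam ->
  forall xs, is_optimal N (fun _ => True)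
    (fun x => / 2 * (norm2 m (resid N A x y)) ^ 2 + lam * powR (pnorm p N x) p) xs ->
  (N - m + 1 <= supp_card N xs)%nat.
Proof.
  intros Hlam xs [Hxs [_ Hopt]].
  destruct (Nat.le_gt_cases (N - m + 1) (supp_card N xs)) as [Hs|Hs]; [exact Hs|exfalso].
  destruct (vec_nonzero_or_zero N xs) as [Hnz|Hzero].
  - destruct (sparse_descent p m N A xs Hp HmN HA Hxs Hnz Hs) as [z [Hz [HAz [Hpz _]]]].
    specialize (Hopt z Hz I).
    rewrite (norm2_resid_ext m N A xs z y HAz), !powR_pnorm in Hopt by lra.
    nra.
  - destruct (penalized_objective_below_zero p m N A y lam xs Hp HmN HA Hy Hlam Hzero)
      as [z [Hz Hlt]].
    specialize (Hopt z Hz I). lra.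
Qed.

Lemma elastic_penalized_support r lam1 lam2 :
  0 < r -> 0 < lam1 -> 0 <= lam2 ->
  forall xs, is_optimal N (fun _ => True)
    (fun x => / 2 * (norm2 m (resid N A x y)) ^ 2
              + lam1 * powR (pnorm p N x) r + lam2 * (norm2 N x) ^ 2) xs ->
  nonzero_vec N xs ->
  (N - m + 1 <= supp_card N xs)%nat.
Proof.
  intros Hr Hlam1 Hlam2 xs [Hxs [_ Hopt]] Hnz.
  destruct (Nat.le_gt_cases (N - m + 1) (supp_card N xs)) as [Hs|Hs]; [exact Hs|exfalso].
  destruct (sparse_descent p m N A xs Hp HmN HA Hxs Hnz Hs) as [z [Hz [HAz [Hpz Hsqz]]]].
  specialize (Hopt z Hz I).
  rewrite (norm2_resid_ext m N A xs z y HAz), !norm2_sq in Hopt.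
  assert (powR (pnorm p N z) r < powR (pnorm p N xs) r).
  { apply powR_lt; [exact Hr|]. split; [apply powR_nonneg|apply pnorm_lt; [lra|exact Hpz]]. }
  nra.
Qed.

End SupportBounds.

Theorem proposition3p1 (p : R) (m N : nat) (A : nat -> nat -> R) (y : nat -> R) :
  1 < p -> (m <= N)%nat ->
  all_square_submatrices_invertible m N A -> nonzero_vec m y ->
  (* (i) min ||x||_p s.t. Ax = y *)
  (forall xs, is_optimal N (fun x => forall i, (i < m)%nat -> matvec N A x i = y i)
                (fun x => pnorm p N x) xs ->
     (N - m + 1 <= supp_card N xs)%nat) /\
  (* (ii) min ||x||_p s.t. ||Ax - y||_2 <= eps, 0 < eps < ||y||_2 *)
  (forall eps, 0 < eps -> eps < norm2 m y ->
   forall xs, is_optimal N (fun x => norm2 m (resid N A x y) <= eps)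
                (fun x => pnorm p N x) xs ->
     (N - m + 1 <= supp_card N xs)%nat) /\
  (* (iii) min 1/2 ||Ax - y||_2^2 + lambda ||x||_p^p *)
  (forall lam, 0 < lam ->
   forall xs, is_optimal N (fun _ => True)
                (fun x => / 2 * (norm2 m (resid N A x y)) ^ 2 + lam * powR (pnorm p N x) p) xs ->
     (N - m + 1 <= supp_card N xs)%nat) /\
  (* (iv) min 1/2 ||Ax - y||_2^2 + lambda1 ||x||_p^r + lambda2 ||x||_2^2, nonzero optima *)
  (forall r lam1 lam2, 0 < r -> 0 < lam1 -> 0 <= lam2 ->
   forall xs, is_optimal N (fun _ => True)
                (fun x => / 2 * (norm2 m (resid N A x y)) ^ 2
                          + lam1 * powR (pnorm p N x) r + lam2 * (norm2 N x) ^ 2) xs ->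
     nonzero_vec N xs ->
     (N - m + 1 <= supp_card N xs)%nat).
Proof.
  intros Hp HmN HA Hy. split; [|split; [|split]].
  - exact (basis_pursuit_support p m N A y Hp HmN HA Hy).
  - exact (denoising_support p m N A y Hp HmN HA).
  - exact (lp_penalized_support p m N A y Hp HmN HA Hy).
  - exact (elastic_penalized_support p m N A y Hp HmN HA).
Qed.
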